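(* Let $X$ be a finite set with $N=|X|$ and $n=\binom N2$. Let $t,t'$ be two binary equidistant trees on taxa $X$ with different coarse types, and let $\Omega>\omega>0$ be such that $\max\{\eta(t),\eta(t')\}\le\Omega$ and $\min\{\nu(t),\nu(t')\}\ge\omega$. Then \[ d_\Delta(t,t')\ \ge\ \omega\Bigl(\bigl(3-2\tfrac{\Omega}{\omega}\bigr)n+\tfrac32 N-2\Bigr). \]
   Context: An equidistant tree $t$ on taxa $X$ is identified with the vector $(t_{ab})\in\mathbb{R}^n$ (coordinates indexed by unordered pairs of distinct taxa) of leaf-to-leaf path lengths; such vectors are exactly those for which, for all distinct $a,b,c$, $\max\{t_{ab},t_{ac},t_{bc}\}$ is attained at least twice. Trees are considered up to adding a multiple of $\mathbb{1}$. The depth of a node is its distance from the root. Let $M=\max_{a\ne b}t_{ab}$; the depth of the lowest common ancestor of leaves $a\ne b$ equals $(M-t_{ab})/2$. Define $\eta(t)$ = maximal depth of an internal node $=\frac12(M-\min_{a\neq b}t_{ab})$ and $\nu(t)$ = minimal depth of an internal node other than the root $=\frac12\min\{M-t_{ab}: t_{ab}<M\}$ ($+\infty$ if there is none). The coarse type of $t$ is the partition of $X$ into the leaf sets of the subtrees at the children of the root, i.e. distinct $a,b$ are in the same block iff $t_{ab}<M$. The tree is binary if every internal node has exactly two children, i.e. for all distinct $a,b,c$ the numbers $t_{ab},t_{ac},t_{bc}$ are not all equal. $d_{\Delta}(x,y)=\sum_{i=1}^n (y_i-x_i) + n\max_{i}(x_i-y_i)$. *)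

From HB Require Import structures.
From mathcomp Require Import all_boot all_order all_algebra.
Set Implicit Arguments. Unset Strict Implicit. Unset Printing Implicit Defensive.
Import Order.TTheory GRing.Theory Num.Theory.
Local Open Scope ring_scope.

Section Trees.
Variables (R : realFieldType) (X : finType).

Definition pairs := {A : {set X} | #|A| == 2%N}.

Definition vec := pairs -> R.

(* Coordinate t_{ab} (for a <> b; 0 otherwise, never used). *)
Definition coord (t : vec) (a b : X) : R :=
  if @insub _ (fun A : {set X} => #|A| == 2%N) pairs [set a; b] is Some p
  then t p else 0.

(* maximum / minimum of f over all pairs (0 if there are no pairs) *)
Definition maxp (f : pairs -> R) : R :=
  let s := [seq f p | p <- enum {: pairs}] in \big[Num.max/head 0 s]_(v <- s) v.
Definition minp (f : pairs -> R) : R :=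
  let s := [seq f p | p <- enum {: pairs}] in \big[Num.min/head 0 s]_(v <- s) v.

Definition equidistant (t : vec) : Prop :=
  forall a b c : X, a != b -> a != c -> b != c ->
    let x := coord t a b in let y := coord t a c in let z := coord t b c in
    let m := Num.max x (Num.max y z) in
    [|| (x == m) && (y == m), (x == m) && (z == m) | (y == m) && (z == m)].

Definition binary (t : vec) : Prop :=
  forall a b c : X, a != b -> a != c -> b != c ->
    ~ (coord t a b = coord t a c /\ coord t a c = coord t b c).

Definition Mt (t : vec) : R := maxp t.

Definition eta_depth (t : vec) : R := (Mt t - minp t) / 2.

(* nu(t) = (1/2) min {M - t_ab : t_ab < M}; None encodes +infinity *)
Definition nu_depth (t : vec) : option R :=
  let s := [seq (Mt t - t p) / 2 | p <- enum {: pairs} & t p < Mt t] in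
  if s is v :: _ then Some (\big[Num.min/v]_(w <- s) w) else None.

Definition ge_opt (o : option R) (w : R) : bool :=
  if o is Some v then w <= v else true.

Definition same_block (t : vec) (a b : X) : bool := (a == b) || (coord t a b < Mt t).
Definition coarse_type (t : vec) : {set {set X}} :=
  [set [set b | same_block t a b] | a in X].

Definition dDelta (x y : vec) : R :=
  \sum_(p : pairs) (y p - x p) + ('C(#|X|, 2))%:R * maxp (fun p => x p - y p).

End Trees.

From Pilot Require Import Defs.
From HB Require Import structures.
From mathcomp Require Import all_boot all_order all_algebra.
From mathcomp Require Import zify ring lra.
Set Implicit Arguments. Unset Strict Implicit. Unset Printing Implicit Defensive.
Import Order.TTheory GRing.Theory Num.Theory.
Local Open Scope ring_scope.

(* Since the coarse types differ, some pair [q] is separated at the root of [t]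
   but not at the root of [t']: both roots have exactly two children, and a
   partition into two blocks cannot be strictly refined by another one.
   Pair by pair, the bounds on [nu t] and [eta t'] give
     t'_p - t_p >= (M' - M) + 2 omega [p not separated at the root of t]
                            - 2 Omega [p not separated at the root of t'],
   while the max term of d_Delta is at least n (t_q - t'_q) >= n (M - M' + 2 omega),
   so the root heights M, M' cancel. Finally the root of a binary tree with
   children of sizes k + l = N separates k l pairs, and N - 1 <= k l <= N^2 / 4. *)

Section Pairs.
Variables (R : realFieldType) (X : finType).
Implicit Types (t : vec R X) (p : pairs X) (f : pairs X -> R).

Lemma card_pairs : #|{: pairs X}| = 'C(#|X|, 2).
Proof. by rewrite card_sig -card_draws; apply: eq_card => A; rewrite inE. Qed.

Lemma pairP p : exists a b, a != b /\ val p = [set a; b].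
Proof. exact/cards2P/(valP p). Qed.

Lemma exists_pair (a b : X) : a != b -> exists p : pairs X, val p = [set a; b].
Proof.
move=> ab; have card2 : #|[set a; b]| == 2%N by rewrite cards2 ab.
by exists (exist (fun A : {set X} => #|A| == 2%N) _ card2).
Qed.

Lemma pair_neq p a b : val p = [set a; b] -> a != b.
Proof. by move=> e; move: (valP p); rewrite e cards2; case: (a != b). Qed.

Lemma coordE t p a b : val p = [set a; b] -> Defs.coord t a b = t p.
Proof. by move=> e; rewrite /Defs.coord -e valK. Qed.

Lemma coordC t a b : Defs.coord t a b = Defs.coord t b a.
Proof. by rewrite /Defs.coord setUC. Qed.

Lemma le_maxp f p : f p <= maxp f.
Proof. by apply: le_bigmax_seq => //; apply/map_f; rewrite mem_enum. Qed.

Lemma coord_le_Mt t a b : a != b -> Defs.coord t a b <= Mt t.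
Proof. by case/exists_pair => p e; rewrite (coordE t e) le_maxp. Qed.

Lemma minp_le f p : minp f <= f p.
Proof. by apply: ge_bigmin_seq => //; apply/map_f; rewrite mem_enum. Qed.

Lemma maxp_attained f p0 : exists p, maxp f = f p.
Proof.
suff : maxp f \in [seq f p | p <- enum {: pairs X}] by case/mapP => p _ ->; exists p.
have := map_f f (mem_enum {: pairs X} p0); rewrite /maxp.
case: [seq _ | _ <- _] => // v s _; rewrite big_seq.
elim/big_ind: _ => //=; first exact: mem_head.
by move=> x y xs ys; case: leP.
Qed.

End Pairs.

Section RootPairs.
Variables (R : realFieldType) (X : finType).
Implicit Types (t : vec R X) (p : pairs X).

(* The pairs whose lowest common ancestor is the root. *)
Definition root_pairs t : {set pairs X} := [set p | t p == Mt t].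

Lemma lt_Mt t p : (t p < Mt t) = (p \notin root_pairs t).
Proof. by rewrite inE lt_neqAle le_maxp andbT. Qed.

Lemma root_pairs_nonempty t p0 : exists p, p \in root_pairs t.
Proof. by have [p e] := maxp_attained t p0; exists p; rewrite inE /Mt e. Qed.

Lemma same_blockE t p a b :
  val p = [set a; b] -> same_block t a b = (p \notin root_pairs t).
Proof. by move=> e; rewrite /same_block (negbTE (pair_neq e)) (coordE t e) lt_Mt. Qed.

Lemma same_block_refl t a : same_block t a a.
Proof. by rewrite /same_block eqxx. Qed.

Lemma same_blockC t a b : same_block t a b = same_block t b a.
Proof. by rewrite /same_block eq_sym coordC. Qed.

Lemma same_block_trans t a b c : equidistant t ->
  same_block t a b -> same_block t b c -> same_block t a c.
Proof.
move=> Et; rewrite /same_block.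
have [-> //|ab] := eqVneq a b.
have [<-|bc] := eqVneq b c; first by move=> /= ->; rewrite orbT.
have [<- //|ac /= lt_ab lt_bc] := eqVneq a c.
rewrite ltNge; apply: (contraL _ (Et a b c ab ac bc)) => le_ac /=.
have -> : Defs.coord t a c = Mt t by apply/le_anti; rewrite le_ac coord_le_Mt.
rewrite (max_l (ltW lt_bc)) (max_r (ltW lt_ab)) (lt_eqF lt_ab) (lt_eqF lt_bc).
by rewrite !andbF.
Qed.

Lemma same_block_or t a b c : binary t ->
  ~~ same_block t a b -> same_block t a c || same_block t b c.
Proof.
rewrite /same_block negb_or => Bt /andP[ab]; rewrite -leNgt => le_ab.
have [<- //|ac] := eqVneq a c; have [<-|bc] := eqVneq b c; first by rewrite orbT.
apply/contraT; rewrite negb_or /= -!leNgt => /andP[le_ac le_bc].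
have M_eq x y : x != y -> Mt t <= Defs.coord t x y -> Defs.coord t x y = Mt t.
  by move=> xy le_xy; apply/le_anti; rewrite le_xy coord_le_Mt.
case: (Bt a b c ab ac bc).
by rewrite (M_eq a b ab le_ab) (M_eq a c ac le_ac) (M_eq b c bc le_bc).
Qed.

Lemma same_block_refine t t' : equidistant t -> binary t' ->
  subrel (same_block t') (same_block t) -> subrel (same_block t) (same_block t').
Proof.
(* If [a], [b] are [t]-related but in different [t']-blocks, then every taxon is
   [t]-related to [a], so [t] would have a single block. *)
move=> Et Bt' le_t't a b sab; apply/contraT => nab'.
have ab : a != b by apply: contraNneq nab' => ->; exact: same_block_refl.
have [p0 _] := exists_pair ab.
have [p root_p] := root_pairs_nonempty t p0; have [x [y [_ e]]] := pairP p.
have to_a c : same_block t a c.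
  case/orP: (same_block_or c Bt' nab') => /le_t't // bc.
  exact: same_block_trans sab bc.
suff : same_block t x y by rewrite (same_blockE t e) root_p.
by apply: (same_block_trans Et (b := a)); rewrite // same_blockC.
Qed.

Lemma coarse_type_eq t t' :
  same_block t =2 same_block t' -> coarse_type t = coarse_type t'.
Proof. by move=> e; apply: eq_imset => a; apply/setP => b; rewrite !inE e. Qed.

Lemma root_pairs_subset_coarse_type t t' : equidistant t -> binary t' ->
  root_pairs t \subset root_pairs t' -> coarse_type t = coarse_type t'.
Proof.
move=> Et Bt' /subsetP sub; apply: coarse_type_eq.
have le_t't : subrel (same_block t') (same_block t).
  move=> a b; have [<- _|ab] := eqVneq a b; first exact: same_block_refl.
  by have [p e] := exists_pair ab; rewrite !(same_blockE _ e); apply: contra => /sub.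
by move=> a b; apply/idP/idP; [exact: same_block_refine | exact: le_t't].
Qed.

Lemma card_cut (A : {set X}) (C : {set pairs X}) :
  (forall p a b, val p = [set a; b] -> (p \in C) = ((a \in A) != (b \in A))) ->
  #|C| = (#|A| * #|~: A|)%N.
Proof.
move=> cutC.
have im_C : val @: C = (fun u : X * X => [set u.1; u.2]) @: setX A (~: A).
  apply/setP => S; apply/imsetP/imsetP => [[p Cp ->]|[[a b]]].
    have [x [y [_ e]]] := pairP p; move: Cp; rewrite (cutC _ _ _ e) e.
    case: (boolP (x \in A)) => xA; case: (boolP (y \in A)) => yA //= _.
      by exists (x, y); rewrite ?in_setX ?in_setC ?xA ?yA.
    by exists (y, x); rewrite ?in_setX ?in_setC ?xA ?yA //= setUC.
  rewrite in_setX in_setC => /andP[aA bA] ->.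
  have [p e] : exists p : pairs X, val p = [set a; b].
    by apply: exists_pair; apply: contraNneq bA => <-.
  by exists p; rewrite ?e // (cutC _ _ _ e) aA (negbTE bA).
rewrite -(card_imset _ val_inj) im_C card_in_imset ?cardsX //.
move=> [x1 y1] [x2 y2]; rewrite !in_setX !in_setC /= => /andP[x1A y1A] /andP[x2A y2A] e.
have := set21 x1 y1; have := set22 x1 y1; rewrite e !inE.
case/pred2P => [y1x2|->]; first by move: y1A; rewrite y1x2 x2A.
by case/pred2P => [->//|x1y2]; move: x1A; rewrite x1y2 (negbTE y2A).
Qed.

Lemma root_pairs_cut t p0 : equidistant t -> binary t ->
  exists A : {set X}, [/\ A != set0, ~: A != set0 &
    forall p a b, val p = [set a; b] -> (p \in root_pairs t) = ((a \in A) != (b \in A))].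
Proof.
move=> Et Bt; have [p root_p] := root_pairs_nonempty t p0.
have [a0 [b0 [_ e0]]] := pairP p.
have nab0 : ~~ same_block t a0 b0 by rewrite (same_blockE t e0) root_p.
exists [set x | same_block t a0 x]; split.
- by apply/set0Pn; exists a0; rewrite inE same_block_refl.
- by apply/set0Pn; exists b0; rewrite !inE.
move=> q a b e; rewrite -[q \in _]negbK -(same_blockE t e) !inE.
have [a0a|na0a] := boolP (same_block t a0 a);
  have [a0b|na0b] := boolP (same_block t a0 b) => /=.
- by apply/negbF/(same_block_trans Et (b := a0)); rewrite // same_blockC.
- by apply/negP => ab; case/negP: na0b; exact: same_block_trans Et a0a ab.
- apply/negP => ab; case/negP: na0a; rewrite same_blockC in ab.
  exact: same_block_trans Et a0b ab.
have b0_x x : ~~ same_block t a0 x -> same_block t b0 x.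
  by move=> na0x; move: (same_block_or x Bt nab0); rewrite (negbTE na0x).
by apply/negbF/(same_block_trans Et (b := b0)); [rewrite same_blockC|]; apply: b0_x.
Qed.

Lemma card_root_pairs t p0 : equidistant t -> binary t ->
  (#|X|.-1 <= #|root_pairs t| /\ 4 * #|root_pairs t| <= #|X| ^ 2)%N.
Proof.
move=> Et Bt; have [A [A0 CA0 cutA]] := root_pairs_cut p0 Et Bt.
rewrite (card_cut cutA) -(cardsC A); move: A0 CA0; rewrite -!card_gt0.
move: #|A| #|~: A| => [|k] [|l] // _ _; rewrite -mulnn; split; first nia.
by case: (leqP k l); nia.
Qed.

End RootPairs.

Section DeltaBound.
Variables (R : realFieldType) (X : finType).
Implicit Types (t : vec R X) (p : pairs X).

Lemma sum_if_const (T : finType) (P : pred T) (c : R) :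
  \sum_(i : T) (if P i then c else 0) = c * #|P|%:R.
Proof. by rewrite -big_mkcond sumr_const mulr_natr. Qed.

Lemma nu_depth_le t w p : ge_opt (nu_depth t) w -> t p < Mt t -> t p <= Mt t - 2 * w.
Proof.
rewrite /nu_depth => nu_w lt_p.
have : (Mt t - t p) / 2 \in [seq (Mt t - t q) / 2 | q <- enum {: pairs X} & t q < Mt t].
  by apply: map_f; rewrite mem_filter lt_p mem_enum.
case: [seq _ | _ <- _] nu_w => // v s /= w_le s_p.
have : \big[Num.min/v]_(x <- v :: s) x <= (Mt t - t p) / 2 by exact: ge_bigmin_seq.
move/(le_trans w_le); lra.
Qed.

Lemma eta_depth_ge t W p : eta_depth t <= W -> Mt t - 2 * W <= t p.
Proof. by rewrite /eta_depth; have := minp_le t p; lra. Qed.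

Lemma card_lt_Mt t :
  #|fun p => t p < Mt t|%:R = 'C(#|X|, 2)%:R - #|root_pairs t|%:R :> R.
Proof.
rewrite -card_pairs -(cardsC (root_pairs t)) -natrB ?leq_addr // addKn.
congr (_ %:R); apply: eq_card => p.
by rewrite in_setC -lt_Mt.
Qed.

Lemma dDelta_ge t t' q w W :
    ge_opt (nu_depth t) w -> ge_opt (nu_depth t') w -> eta_depth t' <= W ->
    q \in root_pairs t -> q \notin root_pairs t' ->
  2 * w * (2 * 'C(#|X|, 2)%:R - #|root_pairs t|%:R)
    - 2 * W * ('C(#|X|, 2)%:R - #|root_pairs t'|%:R) <= dDelta t t'.
Proof.
move=> nu_t nu_t' eta_t' q_t q_t'; rewrite /dDelta; set n : R := 'C(#|X|, 2)%:R.
have gap p : Mt t' - Mt t + (if t p < Mt t then 2 * w else 0)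
               - (if t' p < Mt t' then 2 * W else 0) <= t' p - t p.
  have : t p <= Mt t := le_maxp t p; have : t' p <= Mt t' := le_maxp t' p.
  have := eta_depth_ge p eta_t'.
  by case: ifPn => [/(nu_depth_le nu_t)|]; case: ifPn => [_|]; rewrite -?leNgt; lra.
have sum_ge : n * (Mt t' - Mt t) + 2 * w * (n - #|root_pairs t|%:R)
                - 2 * W * (n - #|root_pairs t'|%:R) <= \sum_p (t' p - t p).
  apply: le_trans (ler_sum _ (fun p _ => gap p)).
  rewrite sumrB big_split /= sumr_const card_pairs !sum_if_const !card_lt_Mt.
  by rewrite -[_ *+ 'C(_, _)]mulr_natr -/n mulrC.
have max_ge : n * (Mt t - Mt t' + 2 * w) <= n * maxp (fun p => t p - t' p).
  apply: ler_wpM2l => //; apply: le_trans (le_maxp _ q) => /=.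
  have /(nu_depth_le nu_t') : t' q < Mt t' by rewrite lt_Mt.
  by move: q_t; rewrite inE => /eqP->; lra.
lra.
Qed.

End DeltaBound.

Lemma cut_count_ineq (R : realFieldType) (N c c' : nat) (w W : R) :
    0 < w -> w <= W -> (N.-1 <= c')%N -> (4 * c <= N ^ 2)%N ->
  w * ((3 - 2 * (W / w)) * 'C(N, 2)%:R + 3 / 2 * N%:R - 2)
    <= 2 * w * (2 * 'C(N, 2)%:R - c%:R) - 2 * W * ('C(N, 2)%:R - c'%:R).
Proof.
move=> w_gt0 le_wW c'_ge c_le.
have bin2 : 2 * 'C(N, 2)%:R = N%:R * (N%:R - 1) :> R.
  rewrite -(natrM _ 2) -mul_bin_diag bin1 natrM.
  by case: N {c'_ge c_le} => [|N]; rewrite ?mul0r // -natr1 addrK.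
have c_le' : w * (4 * c%:R) <= w * N%:R ^+ 2.
  by rewrite ler_pM2l // -natrX -(natrM _ 4) ler_nat.
have c'_ge' : w * (N%:R - 1) <= w * c'%:R.
  by rewrite ler_pM2l // lerBlDr natr1 ler_nat; lia.
have c'_le : w * c'%:R <= W * c'%:R by rewrite ler_wpM2r.
have w_bin2 : w * (2 * 'C(N, 2)%:R) = w * (N%:R * (N%:R - 1)) by rewrite bin2.
have -> : w * ((3 - 2 * (W / w)) * 'C(N, 2)%:R + 3 / 2 * N%:R - 2)
    = 3 * w * 'C(N, 2)%:R - 2 * W * 'C(N, 2)%:R + 3 / 2 * w * N%:R - 2 * w.
  by field; rewrite lt0r_neq0.
lra.
Qed.

Theorem mainTheorem6 (R : realFieldType) (X : finType) (t t' : vec R X)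
    (Omega omega : R) :
  equidistant t -> binary t -> equidistant t' -> binary t' ->
  coarse_type t != coarse_type t' ->
  0 < omega -> omega < Omega ->
  Num.max (eta_depth t) (eta_depth t') <= Omega ->
  ge_opt (nu_depth t) omega -> ge_opt (nu_depth t') omega ->
  omega * ((3 - 2 * (Omega / omega)) * ('C(#|X|, 2))%:R
           + 3 / 2 * (#|X|)%:R - 2) <= dDelta t t'.
Proof.
move=> Et Bt Et' Bt' neq omega_gt0 lt_omega eta_le nu_t nu_t'.
have /subsetPn[q q_t q_t'] : ~~ (root_pairs t \subset root_pairs t').
  by apply: contraNN neq => /(root_pairs_subset_coarse_type Et Bt')/eqP.
have eta_t' : eta_depth t' <= Omega by move: eta_le; rewrite ge_max => /andP[].
have [_ root_t_le] := card_root_pairs q Et Bt.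
have [root_t'_ge _] := card_root_pairs q Et' Bt'.
apply: le_trans (dDelta_ge nu_t nu_t' eta_t' q_t q_t').
exact: cut_count_ineq (ltW lt_omega) root_t'_ge root_t_le.
Qed.
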